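(* The logic $\mathsf{MGrz}\vee\mathsf{LKur}$ (the smallest extension of $\mathsf{MS4}$ containing both $\mathsf{MGrz}$ and $\mathsf{LKur}$) is not a modal companion of $\mathsf{MIPC}$.
   Context: $\mathsf{MIPC}$ is the smallest set of formulas in the bimodal language $\mathcal{L}_{\forall\exists}$ containing all theorems of $\mathsf{IPC}$; $\forall(p\wedge q)\leftrightarrow(\forall p\wedge\forall q)$, $\forall p\to p$, $\forall p\to\forall\forall p$; $\exists(p\vee q)\leftrightarrow(\exists p\vee\exists q)$, $p\to\exists p$, $\exists\exists p\to\exists p$, $(\exists p\wedge\exists q)\to\exists(\exists p\wedge q)$; $\exists\forall p\to\forall p$, $\exists p\to\forall\exists p$; closed under modus ponens, substitution and $\varphi/\forall\varphi$. $\mathsf{MS4}$ is the smallest set of formulas in the classical bimodal language $\mathcal{L}_{\Box\forall}$ containing all classical tautologies, the $\mathsf{S4}$ axioms for $\Box$, the $\mathsf{S5}$ axioms for $\forall$, and $\Box\forall p\to\forall\Box p$, closed under modus ponens, substitution, $\Box$- and $\forall$-necessitation; extensions are such sets closed under these rules. $\Diamond=\neg\Box\neg$. $\mathsf{MGrz}=\mathsf{MS4}+\Box(\Box(p\to\Box p)\to p)\to p$, $\mathsf{LKur}=\mathsf{MS4}+\Box\forall\Diamond\Box p\to\Diamond\forall p$. Gödel translation: $\bot^t=\bot$, $p^t=\Box p$, $(\varphi\wedge\psi)^t=\varphi^t\wedge\psi^t$, $(\varphi\vee\psi)^t=\varphi^t\vee\psi^t$, $(\varphi\to\psi)^t=\Box(\neg\varphi^t\vee\psi^t)$,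 $(\forall\varphi)^t=\Box\forall\varphi^t$, $(\exists\varphi)^t=\exists\varphi^t$. An extension $\mathsf{M}$ of $\mathsf{MS4}$ is a modal companion of $\mathsf{MIPC}$ if for all $\varphi$: $\mathsf{MIPC}\vdash\varphi$ iff $\mathsf{M}\vdash\varphi^t$. *)

Inductive iform : Type :=
| IVar : nat -> iform
| IBot : iform
| IAnd : iform -> iform -> iform
| IOr  : iform -> iform -> iform
| IImp : iform -> iform -> iform
| IAll : iform -> iform
| IEx  : iform -> iform.

Definition IIff (a b : iform) : iform := IAnd (IImp a b) (IImp b a).

Fixpoint isubst (s : nat -> iform) (f : iform) : iform :=
  match f with
  | IVar n => s n
  | IBot => IBot
  | IAnd a b => IAnd (isubst s a) (isubst s b)
  | IOr a b => IOr (isubst s a) (isubst s b)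
  | IImp a b => IImp (isubst s a) (isubst s b)
  | IAll a => IAll (isubst s a)
  | IEx a => IEx (isubst s a)
  end.

Inductive IPC_axiom : iform -> Prop :=
| ipc_k  : forall a b, IPC_axiom (IImp a (IImp b a))
| ipc_s  : forall a b c, IPC_axiom (IImp (IImp a (IImp b c)) (IImp (IImp a b) (IImp a c)))
| ipc_a1 : forall a b, IPC_axiom (IImp (IAnd a b) a)
| ipc_a2 : forall a b, IPC_axiom (IImp (IAnd a b) b)
| ipc_a3 : forall a b, IPC_axiom (IImp a (IImp b (IAnd a b)))
| ipc_o1 : forall a b, IPC_axiom (IImp a (IOr a b))
| ipc_o2 : forall a b, IPC_axiom (IImp b (IOr a b))
| ipc_o3 : forall a b c, IPC_axiom (IImp (IImp a c) (IImp (IImp b c) (IImp (IOr a b) c)))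
| ipc_efq : forall a, IPC_axiom (IImp IBot a).

Definition ip := IVar 0.
Definition iq := IVar 1.

Inductive MIPC_axiom : iform -> Prop :=
| mipc_all_and : MIPC_axiom (IIff (IAll (IAnd ip iq)) (IAnd (IAll ip) (IAll iq)))
| mipc_all_T   : MIPC_axiom (IImp (IAll ip) ip)
| mipc_all_4   : MIPC_axiom (IImp (IAll ip) (IAll (IAll ip)))
| mipc_ex_or   : MIPC_axiom (IIff (IEx (IOr ip iq)) (IOr (IEx ip) (IEx iq)))
| mipc_ex_T    : MIPC_axiom (IImp ip (IEx ip))
| mipc_ex_4    : MIPC_axiom (IImp (IEx (IEx ip)) (IEx ip))
| mipc_ex_and  : MIPC_axiom (IImp (IAnd (IEx ip) (IEx iq)) (IEx (IAnd (IEx ip) iq)))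
| mipc_exall   : MIPC_axiom (IImp (IEx (IAll ip)) (IAll ip))
| mipc_allex   : MIPC_axiom (IImp (IEx ip) (IAll (IEx ip))).

Inductive MIPC : iform -> Prop :=
| MIPC_ipc  : forall f, IPC_axiom f -> MIPC f
| MIPC_ax   : forall f, MIPC_axiom f -> MIPC f
| MIPC_mp   : forall a b, MIPC (IImp a b) -> MIPC a -> MIPC b
| MIPC_subst : forall s f, MIPC f -> MIPC (isubst s f)
| MIPC_nec  : forall f, MIPC f -> MIPC (IAll f).

Inductive mform : Type :=
| MVar : nat -> mform
| MBot : mform
| MAnd : mform -> mform -> mform
| MOr  : mform -> mform -> mform
| MImp : mform -> mform -> mform
| MBox : mform -> mform
| MAll : mform -> mform.

Definition MNot (a : mform) : mform := MImp a MBot.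
Definition MDia (a : mform) : mform := MNot (MBox (MNot a)).
Definition MEx  (a : mform) : mform := MNot (MAll (MNot a)).

Fixpoint msubst (s : nat -> mform) (f : mform) : mform :=
  match f with
  | MVar n => s n
  | MBot => MBot
  | MAnd a b => MAnd (msubst s a) (msubst s b)
  | MOr a b => MOr (msubst s a) (msubst s b)
  | MImp a b => MImp (msubst s a) (msubst s b)
  | MBox a => MBox (msubst s a)
  | MAll a => MAll (msubst s a)
  end.

Inductive CPC_axiom : mform -> Prop :=
| cpc_k  : forall a b, CPC_axiom (MImp a (MImp b a))
| cpc_s  : forall a b c, CPC_axiom (MImp (MImp a (MImp b c)) (MImp (MImp a b) (MImp a c)))
| cpc_a1 : forall a b, CPC_axiom (MImp (MAnd a b) a)
| cpc_a2 : forall a b, CPC_axiom (MImp (MAnd a b) b)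
| cpc_a3 : forall a b, CPC_axiom (MImp a (MImp b (MAnd a b)))
| cpc_o1 : forall a b, CPC_axiom (MImp a (MOr a b))
| cpc_o2 : forall a b, CPC_axiom (MImp b (MOr a b))
| cpc_o3 : forall a b c, CPC_axiom (MImp (MImp a c) (MImp (MImp b c) (MImp (MOr a b) c)))
| cpc_efq : forall a, CPC_axiom (MImp MBot a)
| cpc_dne : forall a, CPC_axiom (MImp (MNot (MNot a)) a).

Definition mp := MVar 0.
Definition mq := MVar 1.

Inductive MS4_axiom : mform -> Prop :=
| ms4_box_K : MS4_axiom (MImp (MBox (MImp mp mq)) (MImp (MBox mp) (MBox mq)))
| ms4_box_T : MS4_axiom (MImp (MBox mp) mp)
| ms4_box_4 : MS4_axiom (MImp (MBox mp) (MBox (MBox mp)))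
| ms4_all_K : MS4_axiom (MImp (MAll (MImp mp mq)) (MImp (MAll mp) (MAll mq)))
| ms4_all_T : MS4_axiom (MImp (MAll mp) mp)
| ms4_all_5 : MS4_axiom (MImp (MEx mp) (MAll (MEx mp)))
| ms4_inter : MS4_axiom (MImp (MBox (MAll mp)) (MAll (MBox mp))).

Inductive MS4plus (X : mform -> Prop) : mform -> Prop :=
| MS4_cpc   : forall f, CPC_axiom f -> MS4plus X f
| MS4_ax    : forall f, MS4_axiom f -> MS4plus X f
| MS4_extra : forall f, X f -> MS4plus X f
| MS4_mp    : forall a b, MS4plus X (MImp a b) -> MS4plus X a -> MS4plus X b
| MS4_subst : forall s f, MS4plus X f -> MS4plus X (msubst s f)
| MS4_necB  : forall f, MS4plus X f -> MS4plus X (MBox f)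
| MS4_necA  : forall f, MS4plus X f -> MS4plus X (MAll f).

Definition grz_ax : mform :=
  MImp (MBox (MImp (MBox (MImp mp (MBox mp))) mp)) mp.
Definition kur_ax : mform :=
  MImp (MBox (MAll (MDia (MBox mp)))) (MDia (MAll mp)).

Definition MGrz : mform -> Prop := MS4plus (fun f => f = grz_ax).
Definition LKur : mform -> Prop := MS4plus (fun f => f = kur_ax).
(* MGrz \/ LKur: smallest extension of MS4 containing MGrz and LKur,
   i.e. MS4 + Grz + Kur. *)
Definition MGrz_join_LKur : mform -> Prop :=
  MS4plus (fun f => f = grz_ax \/ f = kur_ax).

Fixpoint godel (f : iform) : mform :=
  match f with
  | IVar n => MBox (MVar n)
  | IBot => MBot
  | IAnd a b => MAnd (godel a) (godel b)
  | IOr a b => MOr (godel a) (godel b)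
  | IImp a b => MBox (MOr (MNot (godel a)) (godel b))
  | IAll a => MBox (MAll (godel a))
  | IEx a => MEx (godel a)
  end.

Definition modal_companion_of_MIPC (M : mform -> Prop) : Prop :=
  forall f : iform, MIPC f <-> M (godel f).

(* Kuroda's principle ∀¬¬p → ¬¬∀p separates the two logics.  Its Gödel
   translation is provable from Grz and Kur: for the boxed premise
   Q ≈ □∀□◇□p, Kur gives Q → ◇∀□p, and Grz upgrades any Q → ◇c with Q → □Q
   to Q → ◇□c (a c-point seen from every Q-point is found at a maximal one),
   which yields the translated conclusion □◇□∀□p.  But the principle fails in
   the intuitionistic Kripke frame  w0,  w1 < w2  with quantifiers ranging over
   all worlds and p false only at w1: there ¬¬p holds everywhere while ∀p holds
   nowhere. *)

From Stdlib Require Import List Setoid.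
Import ListNotations.

Definition inot (a : iform) : iform := IImp a IBot.
Definition idneg (a : iform) : iform := inot (inot a).
Definition kuroda : iform := IImp (IAll (idneg ip)) (idneg (IAll ip)).

Local Notation "□ a" := (MBox a) (at level 35, right associativity).
Local Notation "◇ a" := (MDia a) (at level 35, right associativity).
Local Notation "a ⇒ b" := (MImp a b) (at level 85, right associativity).

Definition subst_pq (a b : mform) (n : nat) : mform :=
  match n with 0 => a | 1 => b | _ => MVar n end.

Section Derivations.

Context {X : mform -> Prop}.
Local Notation thm := (MS4plus X).

Lemma thm_imp_refl a : thm (a ⇒ a).
Proof.
  apply (MS4_mp _ (a ⇒ a ⇒ a)); [|apply MS4_cpc, cpc_k].
  apply (MS4_mp _ (a ⇒ (a ⇒ a) ⇒ a)); apply MS4_cpc; [apply cpc_s | apply cpc_k].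
Qed.

(* Hypotheses are not closed under necessitation or substitution, which is
   what makes the deduction theorem hold. *)
Inductive derives (G : list mform) : mform -> Prop :=
| derives_hyp a : In a G -> derives G a
| derives_thm a : thm a -> derives G a
| derives_mp a b : derives G (a ⇒ b) -> derives G a -> derives G b.

Lemma derives_deduction G a b : derives (a :: G) b -> derives G (a ⇒ b).
Proof.
  induction 1 as [b [<-|Hb]|b Hb|b c _ IHbc _ IHb].
  - apply derives_thm, thm_imp_refl.
  - apply (derives_mp _ b); [apply derives_thm, MS4_cpc, cpc_k | apply derives_hyp, Hb].
  - apply (derives_mp _ b); [apply derives_thm, MS4_cpc, cpc_k | apply derives_thm, Hb].
  - apply (derives_mp _ (a ⇒ b)); [|exact IHb].
    apply (derives_mp _ (a ⇒ b ⇒ c)); [apply derives_thm, MS4_cpc, cpc_s | exact IHbc].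
Qed.

Lemma derives_nil a : derives [] a -> thm a.
Proof.
  induction 1 as [a []|a Ha|a b _ IHab _ IHa]; [exact Ha | exact (MS4_mp _ _ _ IHab IHa)].
Qed.

Lemma thm_derives1 a b : derives [a] b -> thm (a ⇒ b).
Proof. intros H; apply derives_nil, derives_deduction, H. Qed.

Lemma thm_derives2 a b c : derives [b; a] c -> thm (a ⇒ b ⇒ c).
Proof. intros H; apply derives_nil, derives_deduction, derives_deduction, H. Qed.

Lemma derives_app G a b : thm (a ⇒ b) -> derives G a -> derives G b.
Proof. intros Hab Ha; exact (derives_mp _ _ _ (derives_thm _ _ Hab) Ha). Qed.

Lemma derives_app2 G a b c :
  thm (a ⇒ b ⇒ c) -> derives G a -> derives G b -> derives G c.
Proof. intros Habc Ha Hb; exact (derives_mp _ _ _ (derives_app _ _ _ Habc Ha) Hb). Qed.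

Lemma derives_byc G a : derives (MNot a :: G) MBot -> derives G a.
Proof.
  intros H; apply (derives_app _ (MNot (MNot a))); [apply MS4_cpc, cpc_dne|].
  apply derives_deduction, H.
Qed.

Lemma derives_efq G a : derives G MBot -> derives G a.
Proof. apply derives_app, MS4_cpc, cpc_efq. Qed.

Lemma derives_or_introl G a b : derives G a -> derives G (MOr a b).
Proof. apply derives_app, MS4_cpc, cpc_o1. Qed.

Lemma derives_or_intror G a b : derives G b -> derives G (MOr a b).
Proof. apply derives_app, MS4_cpc, cpc_o2. Qed.

Lemma derives_or_elim G a b c :
  derives G (MOr a b) -> derives (a :: G) c -> derives (b :: G) c -> derives G c.
Proof.
  intros Hab Hac Hbc.
  apply (derives_mp _ (MOr a b)); [|exact Hab].
  apply (derives_app2 _ (a ⇒ c) (b ⇒ c)); [apply MS4_cpc, cpc_o3 | |];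
    apply derives_deduction; assumption.
Qed.

Lemma thm_imp_trans a b c : thm (a ⇒ b) -> thm (b ⇒ c) -> thm (a ⇒ c).
Proof.
  intros Hab Hbc; apply thm_derives1, (derives_app _ b _ Hbc), (derives_app _ a _ Hab).
  now apply derives_hyp; left.
Qed.

Lemma thm_boxK a b : thm (□(a ⇒ b) ⇒ □a ⇒ □b).
Proof. exact (MS4_subst _ (subst_pq a b) _ (MS4_ax _ _ ms4_box_K)). Qed.

Lemma thm_boxT a : thm (□a ⇒ a).
Proof. exact (MS4_subst _ (subst_pq a a) _ (MS4_ax _ _ ms4_box_T)). Qed.

Lemma thm_box4 a : thm (□a ⇒ □□a).
Proof. exact (MS4_subst _ (subst_pq a a) _ (MS4_ax _ _ ms4_box_4)). Qed.

Lemma thm_allK a b : thm (MAll (a ⇒ b) ⇒ MAll a ⇒ MAll b).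
Proof. exact (MS4_subst _ (subst_pq a b) _ (MS4_ax _ _ ms4_all_K)). Qed.

Lemma thm_box_mono a b : thm (a ⇒ b) -> thm (□a ⇒ □b).
Proof. intros H; exact (MS4_mp _ _ _ (thm_boxK a b) (MS4_necB _ _ H)). Qed.

Lemma thm_all_mono a b : thm (a ⇒ b) -> thm (MAll a ⇒ MAll b).
Proof. intros H; exact (MS4_mp _ _ _ (thm_allK a b) (MS4_necA _ _ H)). Qed.

End Derivations.

Ltac hyp := apply derives_hyp; simpl; auto.

Section ModalReasoning.

Context {X : mform -> Prop}.
Local Notation thm := (MS4plus X).

Lemma thm_box_mono2 a b c : thm (a ⇒ b ⇒ c) -> thm (□a ⇒ □b ⇒ □c).
Proof.
  intros H; apply thm_derives2, (derives_app2 _ (□(b ⇒ c)) (□b)); [apply thm_boxK | |hyp].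
  apply (derives_app _ (□a)); [apply thm_box_mono, H | hyp].
Qed.

Lemma thm_dia_mono a b : thm (a ⇒ b) -> thm (◇a ⇒ ◇b).
Proof.
  intros H; apply thm_derives2, (derives_mp _ (□ MNot a)); [hyp|].
  apply (derives_app _ (□ MNot b)); [apply thm_box_mono|hyp].
  apply thm_derives2, (derives_mp _ b); [hyp|].
  apply (derives_app _ a); [exact H|hyp].
Qed.

Lemma thm_godel_imp a b : thm (godel a ⇒ godel b) -> thm (godel (IImp a b)).
Proof.
  intros H; apply MS4_necB, derives_nil, derives_byc.
  apply (derives_mp _ (MOr (MNot (godel a)) (godel b))); [hyp|].
  apply derives_or_intror, (derives_app _ (godel a)); [exact H|].
  apply derives_byc, (derives_mp _ (MOr (MNot (godel a)) (godel b))); [hyp|].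
  apply derives_or_introl; hyp.
Qed.

Lemma thm_godel_idneg_dia a : thm (godel (idneg a) ⇒ ◇ godel a).
Proof.
  apply thm_derives2.
  apply (derives_or_elim _ (MNot (□ MOr (MNot (godel a)) MBot)) MBot); [|clear|hyp].
  - apply (derives_app _ (godel (idneg a))); [apply thm_boxT|hyp].
  - apply (derives_mp _ (□ MOr (MNot (godel a)) MBot)); [hyp|].
    apply (derives_app _ (□ MNot (godel a))); [|hyp].
    apply thm_box_mono, thm_derives1, derives_or_introl; hyp.
Qed.

Lemma thm_box_dia_godel_idneg a : thm (□◇ godel a ⇒ godel (idneg a)).
Proof.
  apply thm_box_mono, thm_derives1, derives_or_introl, derives_deduction.
  apply (derives_mp _ (□ MNot (godel a))); [hyp|].
  apply (derives_app _ (□ MOr (MNot (godel a)) MBot)); [|hyp].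
  apply thm_box_mono, thm_derives1, (derives_or_elim _ (MNot (godel a)) MBot); [hyp|hyp|].
  apply derives_efq; hyp.
Qed.

End ModalReasoning.

Section Grzegorczyk.

Context {X : mform -> Prop}.
Hypothesis X_grz : X grz_ax.
Local Notation thm := (MS4plus X).

Lemma thm_grz a : thm (□(□(a ⇒ □a) ⇒ a) ⇒ a).
Proof. exact (MS4_subst _ (subst_pq a a) _ (MS4_extra _ _ X_grz)). Qed.

Lemma grz_dia_box Q c : thm (Q ⇒ □Q) -> thm (Q ⇒ ◇c) -> thm (Q ⇒ ◇□c).
Proof.
  intros Q_box Q_dia.
  set (N := MNot c).
  (* Grz for N: under Q and □¬□c its premise holds vacuously, as Q turns N → □N into c. *)
  assert (Q_stable : thm (Q ⇒ (N ⇒ □N) ⇒ c)).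
  { apply thm_derives2, derives_byc, (derives_mp _ (□N)).
    - apply (derives_app _ Q); [exact Q_dia|hyp].
    - apply (derives_mp _ N); hyp. }
  assert (grz_premise : thm (Q ⇒ □ MNot (□c) ⇒ □(N ⇒ □N) ⇒ N)).
  { apply thm_derives2, derives_deduction, derives_efq, (derives_mp _ (□c)).
    - apply (derives_app _ (□ MNot (□c))); [apply thm_boxT|hyp].
    - apply (derives_app2 _ (□Q) (□(N ⇒ □N))); [apply thm_box_mono2, Q_stable| |hyp].
      apply (derives_app _ Q); [exact Q_box|hyp]. }
  assert (Q_N : thm (Q ⇒ □ MNot (□c) ⇒ N)).
  { apply thm_derives2, (derives_app _ _ _ (thm_grz N)).
    apply (derives_app2 _ (□Q) (□□ MNot (□c))); [apply thm_box_mono2, grz_premise| |].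
    - apply (derives_app _ Q); [exact Q_box|hyp].
    - apply (derives_app _ (□ MNot (□c))); [apply thm_box4|hyp]. }
  apply thm_derives2, (derives_mp _ (□N)); [apply (derives_app _ Q); [exact Q_dia|hyp]|].
  apply (derives_app2 _ (□Q) (□□ MNot (□c))); [apply thm_box_mono2, Q_N| |].
  - apply (derives_app _ Q); [exact Q_box|hyp].
  - apply (derives_app _ (□ MNot (□c))); [apply thm_box4|hyp].
Qed.

End Grzegorczyk.

Section GrzKuroda.

Context {X : mform -> Prop}.
Hypotheses (X_grz : X grz_ax) (X_kur : X kur_ax).
Local Notation thm := (MS4plus X).

Lemma thm_kur a : thm (□ MAll (◇□a) ⇒ ◇ MAll a).
Proof. exact (MS4_subst _ (subst_pq a a) _ (MS4_extra _ _ X_kur)). Qed.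

Lemma godel_kuroda_premise_dia : thm (godel (IAll (idneg ip)) ⇒ ◇ MAll (□ mp)).
Proof.
  apply (thm_imp_trans _ (□ MAll (◇□□ mp))); [|apply thm_kur].
  apply thm_box_mono, thm_all_mono.
  apply (thm_imp_trans _ _ _ (thm_godel_idneg_dia ip)), thm_dia_mono, thm_box4.
Qed.

Lemma thm_godel_kuroda : thm (godel kuroda).
Proof.
  apply thm_godel_imp.
  apply (thm_imp_trans _ _ _ (thm_box4 _)), (thm_imp_trans _ (□◇ godel (IAll ip)));
    [|apply thm_box_dia_godel_idneg].
  apply thm_box_mono, (grz_dia_box X_grz); [apply thm_box4 | apply godel_kuroda_premise_dia].
Qed.

End GrzKuroda.

Lemma MGrz_join_LKur_godel_kuroda : MGrz_join_LKur (godel kuroda).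
Proof. apply thm_godel_kuroda; [left | right]; reflexivity. Qed.

Section UniversalKripkeSemantics.

Context {W : Type} (R : W -> W -> Prop).
Hypotheses (R_refl : forall x, R x x) (R_trans : forall x y z, R x y -> R y z -> R x z).

(* Atoms hold at x when V holds at every successor, so every V gives a
   persistent valuation; the quantifiers range over all worlds. *)
Fixpoint isat (V : nat -> W -> Prop) (f : iform) (x : W) : Prop :=
  match f with
  | IVar n => forall y, R x y -> V n y
  | IBot => False
  | IAnd a b => isat V a x /\ isat V b x
  | IOr a b => isat V a x \/ isat V b x
  | IImp a b => forall y, R x y -> isat V a y -> isat V b y
  | IAll a => forall y, isat V a y
  | IEx a => exists y, isat V a y
  end.

Lemma isat_persistent V f x y : isat V f x -> R x y -> isat V f y.
Proof.
  revert x y; induction f; simpl; intros x y Hx Hxy; try tauto.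
  - intros z Hyz; apply Hx; eauto.
  - destruct Hx; eauto.
  - destruct Hx; eauto.
  - intros z Hyz; apply Hx; eauto.
Qed.

Lemma isat_subst V s f x : isat V (isubst s f) x <-> isat (fun n => isat V (s n)) f x.
Proof.
  revert x; induction f; simpl; intros x.
  - split; [intros Hx y Hxy; eapply isat_persistent; eauto | intros Hx; apply Hx, R_refl].
  - tauto.
  - rewrite IHf1, IHf2; tauto.
  - rewrite IHf1, IHf2; tauto.
  - split; intros Hx y Hxy; specialize (Hx y Hxy);
      [rewrite <- IHf1, <- IHf2 | rewrite IHf1, IHf2]; exact Hx.
  - split; intros Hx y; apply IHf, Hx.
  - split; intros [y Hy]; exists y; apply IHf, Hy.
Qed.

Lemma IPC_axiom_sound f V x : IPC_axiom f -> isat V f x.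
Proof. destruct 1; simpl; firstorder eauto using isat_persistent. Qed.

Lemma MIPC_axiom_sound f V x : MIPC_axiom f -> isat V f x.
Proof. destruct 1; simpl; firstorder eauto using isat_persistent. Qed.

Lemma MIPC_sound f : MIPC f -> forall V x, isat V f x.
Proof.
  induction 1; intros V x.
  - apply IPC_axiom_sound; assumption.
  - apply MIPC_axiom_sound; assumption.
  - exact (IHMIPC1 V x x (R_refl x) (IHMIPC2 V x)).
  - apply isat_subst, IHMIPC.
  - intros y; apply IHMIPC.
Qed.

End UniversalKripkeSemantics.

Inductive world := w0 | w1 | w2.

Definition world_le (x y : world) : Prop :=
  match x, y with
  | w0, w0 | w1, w1 | w1, w2 | w2, w2 => True
  | _, _ => False
  end.

Lemma world_le_refl x : world_le x x.
Proof. destruct x; exact I. Qed.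

Lemma world_le_trans x y z : world_le x y -> world_le y z -> world_le x z.
Proof. destruct x, y, z; simpl; tauto. Qed.

Definition p_off_w1 (_ : nat) (y : world) : Prop := y <> w1.

Lemma kuroda_not_MIPC : ~ MIPC kuroda.
Proof.
  intros H.
  assert (premise : isat world_le p_off_w1 (IAll (idneg ip)) w0).
  { intros y z _ not_p.
    destruct z; [apply (not_p w0) | apply (not_p w2) | apply (not_p w2)]; try exact I;
      intros u Hu; destruct u; simpl in Hu; try contradiction; discriminate. }
  apply (MIPC_sound world_le world_le_refl world_le_trans _ H p_off_w1 w0 w0 I premise w0 I).
  intros y _ all_p. apply (all_p w1 w1 I). reflexivity.
Qed.

Theorem proposition5p5 : ~ modal_companion_of_MIPC MGrz_join_LKur.
Proof.
  intros companion.
  apply kuroda_not_MIPC, companion, MGrz_join_LKur_godel_kuroda.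
Qed.
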